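(* Let $\epsilon>0$ and let $u^1,u^2$ be smooth functions on $[0,1]^2$; denote also by $u^1,u^2$ their restrictions to the grid $(x_i,y_j)=(i\Delta x,j\Delta y)$, $i=0,\dots,N-1$, $j=0,\dots,M-1$, $(N-1)\Delta x=(M-1)\Delta y=1$. Let $D_x=P_x^{-1}Q_x$, $D_y=P_y^{-1}Q_y$ be summation-by-parts operators with $P_x=\Delta x\,\mathrm{diag}(p^x_0,\dots,p^x_{N-1})$, $P_y=\Delta y\,\mathrm{diag}(p^y_0,\dots,p^y_{M-1})$, positive entries, $Q_x+Q_x^T=R_N-L_N$, $Q_y+Q_y^T=R_M-L_M$; assume moreover that for every smooth $\bar u$ with grid restriction $u$ and every grid function $w$, $\|D_x(u\circ w)-u\circ D_xw\|_{P_x}\le C_0\|\partial_x\bar u\|_{L^\infty}\|w\|_{P_x}$ (and analogously in $y$), with $C_0$ independent of the grid. Let $\mathbf V(t)=(V^1,V^2)$ solve the semi-discrete scheme with mixed boundary treatment and homogeneous data ($\mathbf g=\mathbf h=0$): $$ \mathbf V_t+u^1\circ\mathfrak{d}_x\mathbf V+u^2\circ\mathfrak{d}_y\mathbf V-C\mathbf V+\epsilon\,\mathfrak{curl}^2(\mathbf V)=\mathcal B\mathbf V+\epsilon\begin{pmatrix}(\mathcal U-\mathcal D)(I_N\otimes P_y^{-1})\,\mathfrak{curl}(\mathbf V)\\ -(\mathcal R-\mathcal L)(P_x^{-1}\otimes I_M)\,\mathfrak{curl}(\mathbf V)\end{pmatrix},\quad t>0, $$ where $C=\begin{pmatrix}-\mathfrak{d}_yu^2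 & \mathfrak{d}_yu^1\\ \mathfrak{d}_xu^2 & -\mathfrak{d}_xu^1\end{pmatrix}$ (entries acting by componentwise multiplication) and $\mathcal B=(P_x^{-1}\otimes I_M)(\Sigma_{\mathcal L}\mathcal L+\Sigma_{\mathcal R}\mathcal R)+(I_N\otimes P_y^{-1})(\Sigma_{\mathcal D}\mathcal D+\Sigma_{\mathcal U}\mathcal U)$ with diagonal penalty matrices (entries $(\sigma_{\mathcal K})_{i,j}$) chosen so that $$(\sigma_{\mathcal R})_{N-1,j}\le \tfrac{u^{1,-}(1,y_j)}{2},\quad (\sigma_{\mathcal L})_{0,j}\le-\tfrac{u^{1,+}(0,y_j)}{2},\quad (\sigma_{\mathcal U})_{i,M-1}\le\tfrac{u^{2,-}(x_i,1)}{2},\quad (\sigma_{\mathcal D})_{i,0}\le-\tfrac{u^{2,+}(x_i,0)}{2}.$$ Then $$\|\mathbf V(t)\|_{\mathbf P}^2+\epsilon\int_0^t e^{c(t-s)}\|\mathfrak{curl}(\mathbf V(s))\|_{\mathbf P}^2\,ds\le e^{ct}\|\mathbf V(0)\|_{\mathbf P}^2,$$ where $c$ is a constant depending on $\mathfrak{d}_x,\mathfrak{d}_y$ and the derivatives of $u^1,u^2$, but not on $N$ or $M$.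
   Context: $R_n=\mathrm{diag}(0,\dots,0,1)$, $L_n=\mathrm{diag}(1,0,\dots,0)$ ($n\times n$), $I_n$ identity, $\otimes$ Kronecker product. $\mathfrak{d}_x=D_x\otimes I_M$, $\mathfrak{d}_y=I_N\otimes D_y$, $\mathbf P=P_x\otimes P_y$, $\mathcal R=R_N\otimes I_M$, $\mathcal L=L_N\otimes I_M$, $\mathcal U=I_N\otimes R_M$, $\mathcal D=I_N\otimes L_M$. Grid functions are ordered as $(w_{0,0},w_{0,1},\dots,w_{0,M-1},w_{1,0},\dots,w_{N-1,M-1})^T$; $(u\circ w)_k=u_kw_k$; $\|w\|_{P_x}=(w^TP_xw)^{1/2}$. $(v,w)_{\mathbf P}=v^T\mathbf Pw$, $\|w\|_{\mathbf P}=(w,w)_{\mathbf P}^{1/2}$; for vector grid functions $(\mathbf V,\mathbf W)_{\mathbf P}=(V^1,W^1)_{\mathbf P}+(V^2,W^2)_{\mathbf P}$, and operators and $\mathcal B$ act componentwise. $\mathfrak{curl}(\mathbf V)=\mathfrak{d}_xV^2-\mathfrak{d}_yV^1$, $\mathfrak{curl}^2(\mathbf V)=(-\mathfrak{d}_{yy}V^1+\mathfrak{d}_{xy}V^2,\ \mathfrak{d}_{xy}V^1-\mathfrak{d}_{xx}V^2)$ with $\mathfrak{d}_{xy}=\mathfrak{d}_x\mathfrak{d}_y$, etc. $u^{l,+}=\max(u^l,0)$, $u^{l,-}=\min(u^l,0)$. *)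

From HB Require Import structures.
From mathcomp Require Import all_boot all_order all_algebra.
From mathcomp Require Import all_classical all_reals all_analysis.
Set Implicit Arguments. Unset Strict Implicit. Unset Printing Implicit Defensive.
Import Order.TTheory GRing.Theory Num.Theory.
Import numFieldNormedType.Exports.
Local Open Scope classical_set_scope.
Local Open Scope ring_scope.

Section Defs.
Variable R : realType.

Definition smooth1 (f : R -> R) : Prop :=
  forall (n : nat) (x : R), derivable (iter n (@derive1 R R) f) x 1.

Definition pdx (f : R -> R -> R) : R -> R -> R :=
  fun x y => derive1 (fun s => f s y) x.
Definition pdy (f : R -> R -> R) : R -> R -> R :=
  fun x y => derive1 (fun s => f x s) y.

Fixpoint iterpd (l : seq bool) (f : R -> R -> R) : R -> R -> R :=
  match l with
  | [::] => f
  | b :: l' => if b then pdx (iterpd l' f) else pdy (iterpd l' f)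
  end.

Definition smooth2 (f : R -> R -> R) : Prop :=
  forall l : seq bool,
    (forall x y, derivable (fun s => iterpd l f s y) x 1 /\
                 derivable (fun s => iterpd l f x s) y 1) /\
    continuous (fun p : R * R => iterpd l f p.1 p.2).

Definition Rmat (n : nat) : 'M[R]_n := \matrix_(i, k) ((i == k) && (i == n.-1 :> nat))%:R.
Definition Lmat (n : nat) : 'M[R]_n := \matrix_(i, k) ((i == k) && (i == 0 :> nat))%:R.

Definition Pmat (n : nat) (h : R) (p : 'I_n -> R) : 'M[R]_n :=
  \matrix_(i, k) ((i == k)%:R * (h * p i)).
Definition Dop (n : nat) (h : R) (p : 'I_n -> R) (Q : 'M[R]_n) : 'M[R]_n :=
  invmx (Pmat h p) *m Q.

Definition norm1 (n : nat) (h : R) (p : 'I_n -> R) (w : 'cV[R]_n) : R :=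
  Num.sqrt (\sum_(i < n) h * p i * w i 0 ^+ 2).

Definition hadv (n : nat) (u w : 'cV[R]_n) : 'cV[R]_n := \col_i (u i 0 * w i 0).

Definition commutator_bound (n : nat) (h : R) (p : 'I_n -> R) (Q : 'M[R]_n)
    (C0 : R) : Prop :=
  forall (ub : R -> R), smooth1 ub ->
  forall (Lb : R), (forall z, 0 <= z <= 1 -> `|derive1 ub z| <= Lb) ->
  forall w : 'cV[R]_n,
    let u := \col_(i < n) ub (i%:R * h) in
    norm1 h p (Dop h p Q *m hadv u w - hadv u (Dop h p Q *m w))
      <= C0 * Lb * norm1 h p w.

Definition SBP (n : nat) (p : 'I_n -> R) (Q : 'M[R]_n) : Prop :=
  (forall i, 0 < p i) /\ Q + Q^T = Rmat n - Lmat n.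

(* ---------- two-dimensional grid functions ----------
   A grid function (w_{i,j}) is stored as an N x M matrix W with W i j = w_{i,j}
   (the paper's vector is its row-major vectorization). Then
     (A (x) B) vec(W) = vec(A *m W *m B^T). *)
Section Grid.
Variables (N M : nat) (dx dy : R) (px : 'I_N -> R) (py : 'I_M -> R)
          (Qx : 'M[R]_N) (Qy : 'M[R]_M).

Definition Dx := Dop dx px Qx.
Definition Dy := Dop dy py Qy.

(* frak d_x = D_x (x) I_M ; frak d_y = I_N (x) D_y *)
Definition ddx (W : 'M[R]_(N, M)) : 'M[R]_(N, M) := Dx *m W.
Definition ddy (W : 'M[R]_(N, M)) : 'M[R]_(N, M) := W *m Dy^T.

Definition had (U W : 'M[R]_(N, M)) : 'M[R]_(N, M) := \matrix_(i, j) (U i j * W i j).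

Definition ipP (V W : 'M[R]_(N, M)) : R :=
  \sum_(i < N) \sum_(j < M) (dx * px i) * (dy * py j) * V i j * W i j.

Definition normP2 (V1 V2 : 'M[R]_(N, M)) : R := ipP V1 V1 + ipP V2 V2.

(* boundary projections: calR = R_N (x) I_M, calL = L_N (x) I_M,
   calU = I_N (x) R_M, calD = I_N (x) L_M *)
Definition calR (W : 'M[R]_(N, M)) : 'M[R]_(N, M) := Rmat N *m W.
Definition calL (W : 'M[R]_(N, M)) : 'M[R]_(N, M) := Lmat N *m W.
Definition calU (W : 'M[R]_(N, M)) : 'M[R]_(N, M) := W *m (Rmat M)^T.
Definition calD (W : 'M[R]_(N, M)) : 'M[R]_(N, M) := W *m (Lmat M)^T.

(* P_x^{-1} (x) I_M  and  I_N (x) P_y^{-1} *)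
Definition invPx (W : 'M[R]_(N, M)) : 'M[R]_(N, M) := invmx (Pmat dx px) *m W.
Definition invPy (W : 'M[R]_(N, M)) : 'M[R]_(N, M) := W *m (invmx (Pmat dy py))^T.

Definition diagS (s : 'I_N -> 'I_M -> R) (W : 'M[R]_(N, M)) : 'M[R]_(N, M) :=
  \matrix_(i, j) (s i j * W i j).

Definition Bop (sL sR sD sU : 'I_N -> 'I_M -> R) (W : 'M[R]_(N, M)) : 'M[R]_(N, M) :=
  invPx (diagS sL (calL W) + diagS sR (calR W)) +
  invPy (diagS sD (calD W) + diagS sU (calU W)).

Definition curl (V1 V2 : 'M[R]_(N, M)) : 'M[R]_(N, M) := ddx V2 - ddy V1.
Definition curl2_1 (V1 V2 : 'M[R]_(N, M)) : 'M[R]_(N, M) :=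
  - ddy (ddy V1) + ddx (ddy V2).
Definition curl2_2 (V1 V2 : 'M[R]_(N, M)) : 'M[R]_(N, M) :=
  ddx (ddy V1) - ddx (ddx V2).

Definition restr (f : R -> R -> R) : 'M[R]_(N, M) :=
  \matrix_(i, j) f (i%:R * dx) (j%:R * dy).

Definition dt (V : R -> 'M[R]_(N, M)) (t : R) : 'M[R]_(N, M) :=
  \matrix_(i, j) derive1 (fun s => V s i j) t.

End Grid.
End Defs.
Arguments restr {R N M}.

From HB Require Import structures.
From mathcomp Require Import all_boot all_order all_algebra.
From mathcomp Require Import all_classical all_reals all_analysis.
From mathcomp Require Import ring lra.
Set Implicit Arguments. Unset Strict Implicit. Unset Printing Implicit Defensive.
Import Order.TTheory GRing.Theory Num.Theory.
Import numFieldNormedType.Exports.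
Local Open Scope classical_set_scope.
Local Open Scope ring_scope.

(* Energy method.  Pairing the scheme with V in the P-inner product, summation
   by parts (Q + Q^T = R - L) turns each advective term into a boundary term
   plus a commutator D(u o w) - u o D w, bounded by C0 |u'|_oo |w|_P.  The
   conditions on the penalties make the boundary terms nonpositive, C V is
   bounded by the discrete derivatives of u, and the curl-curl term together
   with its boundary penalties contributes exactly -eps |curl V|_P^2.  Hence
   d/dt |V|^2 <= c |V|^2 - 2 eps |curl V|^2 with c = 2 C0 Lu + 4 Ld, so
   s |-> e^{c(t-s)} |V(s)|^2 + eps int_0^s e^{c(t-r)} |curl V(r)|^2 dr is
   nonincreasing on [0, t]. *)

Section SBP1D.
Variable R : realType.

Definition edge_sign {n} (i : 'I_n) : R := ((i : nat) == n.-1)%:R - ((i : nat) == 0%N)%:R.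

Lemma invmx_Pmat n (h : R) (p : 'I_n -> R) : (forall i, h * p i != 0) ->
  invmx (Pmat h p) = diag_mx (\row_i (h * p i)^-1).
Proof.
move=> nz.
have PV : Pmat h p *m diag_mx (\row_i (h * p i)^-1) = 1%:M.
  apply/matrixP => i k; rewrite mul_mx_diag !mxE.
  by case: (eqVneq i k) => [->|_]; rewrite ?mulr1n ?mul1r ?mulfV // !mul0r.
have [Punit _] := mulmx1_unit PV.
by rewrite -[invmx _]mulmx1 -PV mulmxA mulVmx // mul1mx.
Qed.

Lemma Dop_entry n (h : R) (p : 'I_n -> R) Q i k : (forall i, h * p i != 0) ->
  Dop h p Q i k = (h * p i)^-1 * Q i k.
Proof. by move=> nz; rewrite /Dop invmx_Pmat // mul_diag_mx !mxE. Qed.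

Lemma SBP_addT_entry n (p : 'I_n -> R) (Q : 'M[R]_n) i k : SBP p Q ->
  Q i k + Q k i = (i == k)%:R * edge_sign i.
Proof.
case=> _ /matrixP /(_ i k); rewrite !mxE /edge_sign => ->.
by case: (eqVneq i k) => [->|_] /=; rewrite ?mul1r ?mul0r ?subr0.
Qed.

Lemma SBP_by_parts n (p : 'I_n -> R) (Q : 'M[R]_n) (a b : 'I_n -> R) : SBP p Q ->
  \sum_i \sum_k a i * Q i k * b k + \sum_i \sum_k b i * Q i k * a k =
  \sum_i edge_sign i * a i * b i.
Proof.
move=> sbp; rewrite [X in _ + X]exchange_big -big_split /=; apply: eq_bigr => i _.
rewrite -big_split /=.
rewrite (eq_bigr (fun k => a i * b k * (Q i k + Q k i))) => [|k _]; last by ring.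
under eq_bigr => k _ do rewrite (SBP_addT_entry i k sbp).
rewrite (bigD1 i) //= big1 ?addr0 => [|k /negbTE ik]; first by rewrite eqxx mul1r; ring.
by rewrite eq_sym ik mul0r mulr0.
Qed.

Lemma sum_weighted_CauchySchwarz (I : finType) (q a c : I -> R) :
  (forall i, 0 <= q i) ->
  \sum_i q i * a i * c i <=
  Num.sqrt (\sum_i q i * a i ^+ 2) * Num.sqrt (\sum_i q i * c i ^+ 2).
Proof.
move=> q0; set X := \sum_i _ * c i; set A := \sum_i _ * a i ^+ 2; set B := \sum_i _ * c i ^+ 2.
have A0 : 0 <= A by apply: sumr_ge0 => i _; rewrite mulr_ge0 ?sqr_ge0.
pose f i j := q i * a i ^+ 2 * (q j * c j ^+ 2).
pose g i j := q i * a i * c i * (q j * a j * c j).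
have AB : A * B = \sum_i \sum_j f i j.
  by rewrite mulr_suml; apply: eq_bigr => i _; rewrite mulr_sumr.
have XX : X ^+ 2 = \sum_i \sum_j g i j.
  by rewrite expr2 mulr_suml; apply: eq_bigr => i _; rewrite mulr_sumr.
have lagrange : \sum_i \sum_j q i * q j * (a i * c j - a j * c i) ^+ 2 = 2 * (A * B - X ^+ 2).
  have -> : \sum_i \sum_j q i * q j * (a i * c j - a j * c i) ^+ 2 =
      \sum_i \sum_j f i j + \sum_i \sum_j f j i - 2 * \sum_i \sum_j g i j.
    rewrite mulr_sumr -big_split -sumrB; apply: eq_bigr => i _.
    by rewrite mulr_sumr -big_split -sumrB; apply: eq_bigr => j _; rewrite /f /g /=; ring.
  by rewrite [X in _ + X - _]exchange_big AB XX; ring.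
have XAB : X ^+ 2 <= A * B.
  have : 0 <= \sum_i \sum_j q i * q j * (a i * c j - a j * c i) ^+ 2.
    by apply: sumr_ge0 => i _; apply: sumr_ge0 => j _; rewrite mulr_ge0 ?sqr_ge0 // mulr_ge0.
  by rewrite lagrange pmulr_rge0 // subr_ge0.
rewrite -sqrtrM // (le_trans (ler_norm X)) // -sqrtr_sqr ler_sqrt //.
by rewrite mulr_ge0 // sumr_ge0 // => i _; rewrite mulr_ge0 ?sqr_ge0.
Qed.

Lemma weighted_sum_estimate (I : finType) (a T A B : I -> R) (K : R) :
  (forall j, 0 <= a j) -> (forall j, - 2 * T j <= K * A j - B j) ->
  - 2 * \sum_j a j * T j <= K * \sum_j a j * A j - \sum_j a j * B j.
Proof.
move=> a0 le_TAB; rewrite mulr_sumr !mulr_sumr -sumrB.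
by apply: ler_sum => j _; have := ler_wpM2l (a0 j) (le_TAB j); lra.
Qed.

Lemma advection_1D_estimate n (h : R) (p : 'I_n -> R) (Q : 'M[R]_n) C0
    (ub : R -> R) Lb (w : 'cV[R]_n) :
  0 < h -> SBP p Q -> commutator_bound h p Q C0 -> smooth1 ub ->
  (forall z, 0 <= z <= 1 -> `|derive1 ub z| <= Lb) ->
  - 2 * \sum_i h * p i * w i 0 * (ub (i%:R * h) * (Dop h p Q *m w) i 0)
  <= C0 * Lb * \sum_i h * p i * w i 0 ^+ 2
     - \sum_i edge_sign i * ub (i%:R * h) * w i 0 ^+ 2.
Proof.
move=> h0 sbp cb ub_smooth ub'_le.
have hp0 i : 0 < h * p i by rewrite mulr_gt0 //; case: sbp.
have PD (v : 'cV[R]_n) i : h * p i * (Dop h p Q *m v) i 0 = \sum_k Q i k * v k 0.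
  rewrite mxE mulr_sumr; apply: eq_bigr => k _.
  by rewrite Dop_entry => [|j]; rewrite ?mulrA ?mulfV ?mul1r // gt_eqF.
set u := \col_(i < n) ub (i%:R * h).
set Dw := Dop h p Q *m w.
set com := Dop h p Q *m hadv u w - hadv u Dw.
pose S1 := \sum_i \sum_k u i 0 * w i 0 * Q i k * w k 0.
pose S2 := \sum_i \sum_k w i 0 * Q i k * (u k 0 * w k 0).
have transport : \sum_i h * p i * w i 0 * (ub (i%:R * h) * Dw i 0) = S1.
  apply: eq_bigr => i _.
  rewrite (_ : h * p i * _ * _ = u i 0 * w i 0 * (h * p i * Dw i 0)); last by rewrite [u i 0]mxE; ring.
  by rewrite PD mulr_sumr; apply: eq_bigr => k _; ring.
have commutator : \sum_i h * p i * w i 0 * com i 0 = S2 - S1.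
  rewrite -sumrB; apply: eq_bigr => i _.
  have -> : com i 0 = (Dop h p Q *m hadv u w) i 0 - u i 0 * Dw i 0 by rewrite !mxE.
  rewrite (_ : h * p i * _ * _ = w i 0 * (h * p i * (Dop h p Q *m hadv u w) i 0)
                       - u i 0 * w i 0 * (h * p i * Dw i 0)); last by ring.
  rewrite !PD !mulr_sumr; congr (_ - _); apply: eq_bigr => k _; rewrite ?mxE; ring.
have by_parts : S1 + S2 = \sum_i edge_sign i * ub (i%:R * h) * w i 0 ^+ 2.
  rewrite (SBP_by_parts (fun i => u i 0 * w i 0) (fun i => w i 0) sbp).
  by apply: eq_bigr => i _; rewrite mxE; ring.
have com_le : \sum_i h * p i * w i 0 * com i 0 <= C0 * Lb * \sum_i h * p i * w i 0 ^+ 2.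
  have A0 : 0 <= \sum_i h * p i * w i 0 ^+ 2.
    by apply: sumr_ge0 => i _; rewrite mulr_ge0 ?sqr_ge0 ?ltW.
  apply: le_trans (sum_weighted_CauchySchwarz (fun i => w i 0) (fun i => com i 0)
    (fun i => ltW (hp0 i))) _.
  rewrite -{2}(sqr_sqrtr A0) expr2 mulrA [X in X <= _]mulrC.
  by apply: ler_wpM2r; [exact: sqrtr_ge0 | exact: cb ub ub_smooth Lb ub'_le w].
move: com_le; rewrite commutator -/Dw transport -by_parts; lra.
Qed.

Lemma penalty_edge_le n (i : 'I_n) (sl sr v : R) : n.-1 != 0%N ->
  ((i : nat) = n.-1 -> sr <= Num.min v 0 / 2) ->
  ((i : nat) = 0%N -> sl <= - (Num.max v 0 / 2)) ->
  2 * (sl * ((i : nat) == 0%N)%:R + sr * ((i : nat) == n.-1)%:R) <= edge_sign i * v.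
Proof.
rewrite /edge_sign => n1 hr hl.
case: (eqVneq (i : nat) n.-1) => [e1|n1i]; case: (eqVneq (i : nat) 0%N) => [e0|n0i] /=.
- by move: n1; rewrite -e1 e0.
- by move: (hr e1); rewrite minEle; case: (leP v 0) => ? ?; lra.
- by move: (hl e0); rewrite maxEle; case: (leP v 0) => ? ?; lra.
- lra.
Qed.

Lemma grid_point_in01 n (h : R) (i : 'I_n) : 0 < h -> (n.-1)%:R * h = 1 ->
  0 <= i%:R * h <= 1.
Proof.
move=> h0 hn; rewrite mulr_ge0 ?ler0n ?(ltW h0) //= -[leRHS]hn ler_pM2r // ler_nat.
by rewrite -ltnS prednK // (leq_ltn_trans _ (ltn_ord i)).
Qed.

Lemma smooth2_slice_x (u : R -> R -> R) y : smooth2 u -> smooth1 (fun s => u s y).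
Proof.
move=> su n x.
have -> : iter n (@derive1 R R) (fun s => u s y) = fun s => iterpd (nseq n true) u s y.
  by elim: n => //= n ->.
by have [/(_ x y) [] ] := su (nseq n true).
Qed.

Lemma smooth2_slice_y (u : R -> R -> R) x : smooth2 u -> smooth1 (fun s => u x s).
Proof.
move=> su n y.
have -> : iter n (@derive1 R R) (fun s => u x s) = fun s => iterpd (nseq n false) u x s.
  by elim: n => //= n ->.
by have [/(_ x y) [] ] := su (nseq n false).
Qed.

End SBP1D.

Arguments edge_sign {R n} i.

Section Grid.
Variable R : realType.
Variables (N M : nat) (dx dy : R) (px : 'I_N -> R) (py : 'I_M -> R)
          (Qx : 'M[R]_N) (Qy : 'M[R]_M).
Hypotheses (dx_gt0 : 0 < dx) (dy_gt0 : 0 < dy) (sbpx : SBP px Qx) (sbpy : SBP py Qy).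

Local Notation ip := (ipP dx dy px py).
Local Notation dX := (ddx dx px Qx).
Local Notation dY := (ddy dy py Qy).
Local Notation curlV := (curl dx dy px py Qx Qy).

Let px_gt0 i : 0 < px i. Proof. by case: sbpx. Qed.
Let py_gt0 j : 0 < py j. Proof. by case: sbpy. Qed.

Lemma weight_x_gt0 i : 0 < dx * px i. Proof. by rewrite mulr_gt0 ?px_gt0. Qed.
Lemma weight_y_gt0 j : 0 < dy * py j. Proof. by rewrite mulr_gt0 ?py_gt0. Qed.

Let weight_x_neq0 i : dx * px i != 0. Proof. by rewrite gt_eqF ?weight_x_gt0. Qed.
Let weight_y_neq0 j : dy * py j != 0. Proof. by rewrite gt_eqF ?weight_y_gt0. Qed.

Lemma ddxE (W : 'M[R]_(N, M)) i j : dX W i j = (dx * px i)^-1 * \sum_k Qx i k * W k j.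
Proof.
rewrite /ddx /Dx mxE mulr_sumr; apply: eq_bigr => k _.
by rewrite Dop_entry; [rewrite mulrA | exact: weight_x_neq0].
Qed.

Lemma ddyE (W : 'M[R]_(N, M)) i j : dY W i j = (dy * py j)^-1 * \sum_l Qy j l * W i l.
Proof.
rewrite /ddy /Dy mxE mulr_sumr; apply: eq_bigr => l _.
by rewrite mxE Dop_entry; [ring | exact: weight_y_neq0].
Qed.

Lemma invPxE (W : 'M[R]_(N, M)) i j : invPx dx px W i j = (dx * px i)^-1 * W i j.
Proof. by rewrite /invPx (invmx_Pmat weight_x_neq0) mul_diag_mx !mxE. Qed.

Lemma invPyE (W : 'M[R]_(N, M)) i j : invPy dy py W i j = (dy * py j)^-1 * W i j.
Proof. by rewrite /invPy (invmx_Pmat weight_y_neq0) tr_diag_mx mul_mx_diag !mxE mulrC. Qed.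

Lemma calRE (W : 'M[R]_(N, M)) i j : calR W i j = ((i : nat) == N.-1)%:R * W i j.
Proof.
rewrite /calR mxE (bigD1 i) //= big1 ?addr0 => [|k /negbTE ik]; first by rewrite mxE eqxx.
by rewrite mxE eq_sym ik mul0r.
Qed.

Lemma calLE (W : 'M[R]_(N, M)) i j : calL W i j = ((i : nat) == 0%N)%:R * W i j.
Proof.
rewrite /calL mxE (bigD1 i) //= big1 ?addr0 => [|k /negbTE ik]; first by rewrite mxE eqxx.
by rewrite mxE eq_sym ik mul0r.
Qed.

Lemma calUE (W : 'M[R]_(N, M)) i j : calU W i j = ((j : nat) == M.-1)%:R * W i j.
Proof.
rewrite /calU mxE (bigD1 j) //= big1 ?addr0 => [|k /negbTE jk]; first by rewrite !mxE eqxx mulrC.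
by rewrite !mxE eq_sym jk mulr0.
Qed.

Lemma calDE (W : 'M[R]_(N, M)) i j : calD W i j = ((j : nat) == 0%N)%:R * W i j.
Proof.
rewrite /calD mxE (bigD1 j) //= big1 ?addr0 => [|k /negbTE jk]; first by rewrite !mxE eqxx mulrC.
by rewrite !mxE eq_sym jk mulr0.
Qed.

Let mxDE (A B : 'M[R]_(N, M)) i j : (A + B) i j = A i j + B i j.
Proof. by rewrite !mxE. Qed.

Let mxBE (A B : 'M[R]_(N, M)) i j : (A - B) i j = A i j - B i j.
Proof. by rewrite !mxE. Qed.

Let diagSE s (A : 'M[R]_(N, M)) i j : diagS s A i j = s i j * A i j.
Proof. by rewrite mxE. Qed.

Lemma ipD V A B : ip V (A + B) = ip V A + ip V B.
Proof.
rewrite /ipP -big_split; apply: eq_bigr => i _; rewrite -big_split; apply: eq_bigr => j _.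
by rewrite mxE mulrDr.
Qed.

Lemma ipN V A : ip V (- A) = - ip V A.
Proof.
rewrite /ipP -sumrN; apply: eq_bigr => i _; rewrite -sumrN; apply: eq_bigr => j _.
by rewrite mxE mulrN.
Qed.

Lemma ipB V A B : ip V (A - B) = ip V A - ip V B.
Proof. by rewrite ipD ipN. Qed.

Lemma ipZ V k A : ip V (k *: A) = k * ip V A.
Proof.
rewrite /ipP mulr_sumr; apply: eq_bigr => i _; rewrite mulr_sumr; apply: eq_bigr => j _.
by rewrite mxE; ring.
Qed.

Lemma ip_ge0 W : 0 <= ip W W.
Proof.
apply: sumr_ge0 => i _; apply: sumr_ge0 => j _.
by rewrite -mulrA mulr_ge0 ?sqr_ge0 // mulr_ge0 // ltW // ?weight_x_gt0 ?weight_y_gt0.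
Qed.

Definition flux_x (A B : 'M[R]_(N, M)) : R :=
  \sum_i \sum_j dy * py j * edge_sign i * A i j * B i j.
Definition flux_y (A B : 'M[R]_(N, M)) : R :=
  \sum_i \sum_j dx * px i * edge_sign j * A i j * B i j.

Lemma ip_ddx_by_parts A B : ip A (dX B) + ip B (dX A) = flux_x A B.
Proof.
have ipdX C D : ip C (dX D) = \sum_j dy * py j * \sum_i \sum_k C i j * Qx i k * D k j.
  rewrite /ipP exchange_big; apply: eq_bigr => j _; rewrite mulr_sumr.
  apply: eq_bigr => i _; rewrite ddxE [_ * (_^-1 * _)]mulrA !mulr_sumr; apply: eq_bigr => k _.
  by field; rewrite !gt_eqF.
rewrite !ipdX -big_split /= /flux_x exchange_big; apply: eq_bigr => j _.
rewrite -mulrDr (SBP_by_parts (fun i => A i j) (fun i => B i j) sbpx) mulr_sumr.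
by apply: eq_bigr => i _; ring.
Qed.

Lemma ip_ddy_by_parts A B : ip A (dY B) + ip B (dY A) = flux_y A B.
Proof.
have ipdY C D : ip C (dY D) = \sum_i dx * px i * \sum_j \sum_l C i j * Qy j l * D i l.
  rewrite /ipP; apply: eq_bigr => i _; rewrite mulr_sumr.
  apply: eq_bigr => j _; rewrite ddyE [_ * (_^-1 * _)]mulrA !mulr_sumr; apply: eq_bigr => l _.
  by field; rewrite !gt_eqF.
rewrite !ipdY -big_split /= /flux_y; apply: eq_bigr => i _.
rewrite -mulrDr (SBP_by_parts (fun j => A i j) (fun j => B i j) sbpy) mulr_sumr.
by apply: eq_bigr => j _; ring.
Qed.

Lemma ip_penalty_x A B : ip A (calR (invPx dx px B) - calL (invPx dx px B)) = flux_x A B.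
Proof.
apply: eq_bigr => i _; apply: eq_bigr => j _.
by rewrite mxBE calRE calLE !invPxE /edge_sign; field; rewrite !gt_eqF.
Qed.

Lemma ip_penalty_y A B : ip A (calU (invPy dy py B) - calD (invPy dy py B)) = flux_y A B.
Proof.
apply: eq_bigr => i _; apply: eq_bigr => j _.
by rewrite mxBE calUE calDE !invPyE /edge_sign; field; rewrite !gt_eqF.
Qed.

Lemma advection_x_estimate u C0 Lu W :
  smooth2 u -> commutator_bound dx px Qx C0 -> (M.-1)%:R * dy = 1 ->
  (forall x y, 0 <= x <= 1 -> 0 <= y <= 1 -> `|pdx u x y| <= Lu) ->
  - 2 * ip W (had (restr dx dy u) (dX W))
  <= C0 * Lu * ip W W - flux_x (had (restr dx dy u) W) W.
Proof.
move=> su cb hM u_lip.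
pose ub (j : 'I_M) s := u s (j%:R * dy).
have D_col j i : (Dop dx px Qx *m col j W) i 0 = dX W i j.
  by rewrite /ddx /Dx !mxE; apply: eq_bigr => k _; rewrite !mxE.
have -> : ip W (had (restr dx dy u) (dX W)) = \sum_j dy * py j *
    \sum_i dx * px i * col j W i 0 * (ub j (i%:R * dx) * (Dop dx px Qx *m col j W) i 0).
  rewrite /ipP exchange_big; apply: eq_bigr => j _; rewrite mulr_sumr.
  by apply: eq_bigr => i _; rewrite D_col !mxE /ub; ring.
have -> : ip W W = \sum_j dy * py j * \sum_i dx * px i * col j W i 0 ^+ 2.
  rewrite /ipP exchange_big; apply: eq_bigr => j _; rewrite mulr_sumr.
  by apply: eq_bigr => i _; rewrite !mxE; ring.
have -> : flux_x (had (restr dx dy u) W) W = \sum_j dy * py j *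
    \sum_i edge_sign i * ub j (i%:R * dx) * col j W i 0 ^+ 2.
  rewrite /flux_x exchange_big; apply: eq_bigr => j _; rewrite mulr_sumr.
  by apply: eq_bigr => i _; rewrite !mxE /ub; ring.
apply: weighted_sum_estimate => [j|j]; first exact: ltW (weight_y_gt0 j).
apply: advection_1D_estimate => //; first exact: smooth2_slice_x.
by move=> z hz; apply: u_lip => //; apply: grid_point_in01.
Qed.

Lemma advection_y_estimate u C0 Lu W :
  smooth2 u -> commutator_bound dy py Qy C0 -> (N.-1)%:R * dx = 1 ->
  (forall x y, 0 <= x <= 1 -> 0 <= y <= 1 -> `|pdy u x y| <= Lu) ->
  - 2 * ip W (had (restr dx dy u) (dY W))
  <= C0 * Lu * ip W W - flux_y (had (restr dx dy u) W) W.
Proof.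
move=> su cb hN u_lip.
pose ub (i : 'I_N) s := u (i%:R * dx) s.
have D_row i j : (Dop dy py Qy *m (row i W)^T) j 0 = dY W i j.
  by rewrite /ddy /Dy !mxE; apply: eq_bigr => k _; rewrite !mxE mulrC.
have -> : ip W (had (restr dx dy u) (dY W)) = \sum_i dx * px i *
    \sum_j dy * py j * (row i W)^T j 0 *
      (ub i (j%:R * dy) * (Dop dy py Qy *m (row i W)^T) j 0).
  apply: eq_bigr => i _; rewrite mulr_sumr.
  by apply: eq_bigr => j _; rewrite D_row !mxE /ub; ring.
have -> : ip W W = \sum_i dx * px i * \sum_j dy * py j * (row i W)^T j 0 ^+ 2.
  apply: eq_bigr => i _; rewrite mulr_sumr.
  by apply: eq_bigr => j _; rewrite !mxE; ring.
have -> : flux_y (had (restr dx dy u) W) W = \sum_i dx * px i *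
    \sum_j edge_sign j * ub i (j%:R * dy) * (row i W)^T j 0 ^+ 2.
  apply: eq_bigr => i _; rewrite mulr_sumr.
  by apply: eq_bigr => j _; rewrite !mxE /ub; ring.
apply: weighted_sum_estimate => [i|i]; first exact: ltW (weight_x_gt0 i).
apply: advection_1D_estimate => //; first exact: smooth2_slice_y.
by move=> z hz; apply: u_lip => //; apply: grid_point_in01.
Qed.

Lemma ip_Bop sL sR sD sU W :
  ip W (Bop dx dy px py sL sR sD sU W) =
  \sum_i \sum_j (dy * py j * (sL i j * ((i : nat) == 0%N)%:R + sR i j * ((i : nat) == N.-1)%:R)
     + dx * px i * (sD i j * ((j : nat) == 0%N)%:R + sU i j * ((j : nat) == M.-1)%:R))
    * W i j ^+ 2.
Proof.
apply: eq_bigr => i _; apply: eq_bigr => j _.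
rewrite /Bop mxDE invPxE invPyE !mxDE !diagSE calLE calRE calDE calUE.
by field; rewrite !gt_eqF.
Qed.

Lemma penalty_estimate (sL sR sD sU : 'I_N -> 'I_M -> R) (U1 U2 W : 'M[R]_(N, M)) :
  (forall i j, 2 * (sL i j * ((i : nat) == 0%N)%:R + sR i j * ((i : nat) == N.-1)%:R)
               <= edge_sign i * U1 i j) ->
  (forall i j, 2 * (sD i j * ((j : nat) == 0%N)%:R + sU i j * ((j : nat) == M.-1)%:R)
               <= edge_sign j * U2 i j) ->
  2 * ip W (Bop dx dy px py sL sR sD sU W) <= flux_x (had U1 W) W + flux_y (had U2 W) W.
Proof.
move=> pen_x pen_y.
rewrite ip_Bop /flux_x /flux_y -big_split mulr_sumr; apply: ler_sum => i _.
rewrite -big_split mulr_sumr; apply: ler_sum => j _; rewrite /= !mxE.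
have Wij2 := sqr_ge0 (W i j).
have := ler_wpM2r Wij2 (ler_wpM2l (ltW (weight_y_gt0 j)) (pen_x i j)).
have := ler_wpM2r Wij2 (ler_wpM2l (ltW (weight_x_gt0 i)) (pen_y i j)).
move=> ? ?; lra.
Qed.

Lemma zeroth_order_estimate (A B C D W1 W2 : 'M[R]_(N, M)) Ld :
  (forall i j, [/\ `|A i j| <= Ld, `|B i j| <= Ld, `|C i j| <= Ld & `|D i j| <= Ld]) ->
  ip W1 (- had A W1 + had B W2) + ip W2 (had C W1 - had D W2) <=
  2 * Ld * (ip W1 W1 + ip W2 W2).
Proof.
move=> bnd; rewrite /ipP -!big_split mulr_sumr /=; apply: ler_sum => i _.
rewrite -!big_split mulr_sumr /=; apply: ler_sum => j _; rewrite !mxE.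
have [] := bnd i j; rewrite !ler_norml => /andP[a1 a2] /andP[b1 b2] /andP[c1 c2] /andP[d1 d2].
have w0 := mulr_gt0 (weight_x_gt0 i) (weight_y_gt0 j).
set w := _ * (_ * _) in w0 *; set x := W1 i j; set y := W2 i j.
suff pointwise : (- A i j * x + B i j * y) * x + (C i j * x - D i j * y) * y
                 <= 2 * Ld * (x ^+ 2 + y ^+ 2).
  by have := ler_wpM2l (ltW w0) pointwise; lra.
have e1 : 0 <= (Ld + A i j) * x ^+ 2 by rewrite mulr_ge0 ?sqr_ge0 //; lra.
have e2 : 0 <= (Ld + D i j) * y ^+ 2 by rewrite mulr_ge0 ?sqr_ge0 //; lra.
have e3 : 0 <= (Ld - B i j) * (x + y) ^+ 2 by rewrite mulr_ge0 ?sqr_ge0 //; lra.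
have e4 : 0 <= (Ld + B i j) * (x - y) ^+ 2 by rewrite mulr_ge0 ?sqr_ge0 //; lra.
have e5 : 0 <= (Ld - C i j) * (x + y) ^+ 2 by rewrite mulr_ge0 ?sqr_ge0 //; lra.
have e6 : 0 <= (Ld + C i j) * (x - y) ^+ 2 by rewrite mulr_ge0 ?sqr_ge0 //; lra.
nra.
Qed.

Lemma curl2_1E W1 W2 : curl2_1 dx dy px py Qx Qy W1 W2 = dY (curlV W1 W2).
Proof. by rewrite /curl2_1 /curl /ddy /ddx mulmxBl mulmxA addrC. Qed.

Lemma curl2_2E W1 W2 : curl2_2 dx dy px py Qx Qy W1 W2 = - dX (curlV W1 W2).
Proof. by rewrite /curl2_2 /curl /ddy /ddx mulmxBr opprB mulmxA. Qed.

Lemma curl_dissipation W1 W2 (cu := curlV W1 W2) :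
  ip W1 (calU (invPy dy py cu) - calD (invPy dy py cu) - curl2_1 dx dy px py Qx Qy W1 W2)
  - ip W2 (calR (invPx dx px cu) - calL (invPx dx px cu) + curl2_2 dx dy px py Qx Qy W1 W2)
  = - ip cu cu.
Proof.
rewrite curl2_1E curl2_2E [ip W1 _]ipB [ip W2 _]ipB ip_penalty_x ip_penalty_y.
rewrite -ip_ddx_by_parts -ip_ddy_by_parts {2}/cu /curl ipB; lra.
Qed.


Section Scheme.
Variables (u1 u2 : R -> R -> R) (C0 Lu Ld : R) (sL sR sD sU : 'I_N -> 'I_M -> R).
Hypotheses (u1_smooth : smooth2 u1) (u2_smooth : smooth2 u2).
Hypotheses (hN : (N.-1)%:R * dx = 1) (hM : (M.-1)%:R * dy = 1).
Hypotheses (cbx : commutator_bound dx px Qx C0) (cby : commutator_bound dy py Qy C0).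
Hypotheses
  (hR : forall (i : 'I_N) (j : 'I_M), (i : nat) = N.-1 ->
      sR i j <= Num.min (u1 1 (j%:R * dy)) 0 / 2)
  (hL : forall (i : 'I_N) (j : 'I_M), (i : nat) = 0%N ->
      sL i j <= - (Num.max (u1 0 (j%:R * dy)) 0 / 2))
  (hU : forall (i : 'I_N) (j : 'I_M), (j : nat) = M.-1 ->
      sU i j <= Num.min (u2 (i%:R * dx) 1) 0 / 2)
  (hD : forall (i : 'I_N) (j : 'I_M), (j : nat) = 0%N ->
      sD i j <= - (Num.max (u2 (i%:R * dx) 0) 0 / 2)).
Hypothesis hLu : forall x y, 0 <= x <= 1 -> 0 <= y <= 1 ->
  [/\ `|pdx u1 x y| <= Lu, `|pdy u1 x y| <= Lu, `|pdx u2 x y| <= Lu & `|pdy u2 x y| <= Lu].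
Hypothesis hLd : forall (i : 'I_N) (j : 'I_M),
  [/\ `|dX (restr dx dy u1) i j| <= Ld, `|dY (restr dx dy u1) i j| <= Ld,
      `|dX (restr dx dy u2) i j| <= Ld & `|dY (restr dx dy u2) i j| <= Ld].

Local Notation U1 := (restr dx dy u1).
Local Notation U2 := (restr dx dy u2).
Local Notation B := (Bop dx dy px py sL sR sD sU).

Lemma penalty_x_le i j :
  2 * (sL i j * ((i : nat) == 0%N)%:R + sR i j * ((i : nat) == N.-1)%:R)
  <= edge_sign i * U1 i j.
Proof.
apply: penalty_edge_le => [|e|e]; rewrite ?mxE ?e.
- by apply: contra_eq_neq hN => ->; rewrite mul0r eq_sym oner_eq0.
- by rewrite hN; exact: hR.
- by rewrite mul0r; exact: hL.
Qed.

Lemma penalty_y_le i j :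
  2 * (sD i j * ((j : nat) == 0%N)%:R + sU i j * ((j : nat) == M.-1)%:R)
  <= edge_sign j * U2 i j.
Proof.
apply: penalty_edge_le => [|e|e]; rewrite ?mxE ?e.
- by apply: contra_eq_neq hM => ->; rewrite mul0r eq_sym oner_eq0.
- by rewrite hM; exact: hU.
- by rewrite mul0r; exact: hD.
Qed.

Lemma advection_penalty_estimate W :
  2 * ip W (B W) - 2 * ip W (had U1 (dX W)) - 2 * ip W (had U2 (dY W))
  <= 2 * C0 * Lu * ip W W.
Proof.
have adv_x := advection_x_estimate W u1_smooth cbx hM
  (fun x y hx hy => let: And4 h _ _ _ := hLu hx hy in h).
have adv_y := advection_y_estimate W u2_smooth cby hN
  (fun x y hx hy => let: And4 _ _ _ h := hLu hx hy in h).
have pen := penalty_estimate W penalty_x_le penalty_y_le.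
lra.
Qed.

Lemma energy_estimate eps (W1 W2 X1 X2 : 'M[R]_(N, M)) (cu := curlV W1 W2) :
  X1 + had U1 (dX W1) + had U2 (dY W1) - (- had (dY U2) W1 + had (dY U1) W2)
     + eps *: curl2_1 dx dy px py Qx Qy W1 W2
   = B W1 + eps *: (calU (invPy dy py cu) - calD (invPy dy py cu)) ->
  X2 + had U1 (dX W2) + had U2 (dY W2) - (had (dX U2) W1 - had (dX U1) W2)
     + eps *: curl2_2 dx dy px py Qx Qy W1 W2
   = B W2 - eps *: (calR (invPx dx px cu) - calL (invPx dx px cu)) ->
  2 * (ip W1 X1 + ip W2 X2) <=
    (2 * C0 * Lu + 4 * Ld) * (ip W1 W1 + ip W2 W2) - 2 * eps * ip cu cu.
Proof.
move=> eq1 eq2.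
have -> : X1 = B W1 - had U1 (dX W1) - had U2 (dY W1) + (- had (dY U2) W1 + had (dY U1) W2)
    + eps *: (calU (invPy dy py cu) - calD (invPy dy py cu) - curl2_1 dx dy px py Qx Qy W1 W2).
  by apply/matrixP => i j; move/matrixP/(_ i j): eq1; rewrite !mxE; lra.
have -> : X2 = B W2 - had U1 (dX W2) - had U2 (dY W2) + (had (dX U2) W1 - had (dX U1) W2)
    - eps *: (calR (invPx dx px cu) - calL (invPx dx px cu) + curl2_2 dx dy px py Qx Qy W1 W2).
  by apply/matrixP => i j; move/matrixP/(_ i j): eq2; rewrite !mxE; lra.
have TP1 := advection_penalty_estimate W1.
have TP2 := advection_penalty_estimate W2.
have Z := zeroth_order_estimate W1 W2
  (fun i j => let: And4 a b c d := hLd i j in And4 d b c a).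
have dissip := congr1 (fun z => eps * z) (curl_dissipation W1 W2).
rewrite /= -/cu in dissip.
move: TP1 TP2 Z dissip; rewrite !(ipD, ipB, ipZ, ipN) => TP1 TP2 Z dissip.
lra.
Qed.

End Scheme.

End Grid.

Section ExpWeightedEnergy.
Variable R : realType.

Lemma is_derive_expR_affine (c t x : R) :
  is_derive x 1 (fun s => expR (c * (t - s))) (expR (c * (t - x)) * - c).
Proof.
have lin : is_derive x 1 (fun s : R => c * (t - s)) (- c).
  have := is_deriveZ c (is_deriveB (is_derive_cst t x 1) (is_derive_id x 1)).
  by move/is_derive_eq; apply; rewrite sub0r; exact: mulrN1.
exact: is_derive1_comp (is_derive_expR _) lin.
Qed.

Lemma exp_weighted_energy_le (c eps t : R) (E g dE : R -> R) :
  0 < t -> {within `[0, t], continuous E} -> {within `[0, t], continuous g} ->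
  (forall s, 0 < s < t -> is_derive s 1 E (dE s)) ->
  (forall s, 0 < s < t -> dE s <= c * E s - eps * g s) ->
  E t + eps * (\int[lebesgue_measure]_(s in `[0, t]) (expR (c * (t - s)) * g s))
  <= expR (c * t) * E 0.
Proof.
move=> t0 E_cont g_cont E_der dE_le.
pose ea s := expR (c * (t - s)).
pose f s := ea s * g s.
pose P s := parameterized_integral lebesgue_measure 0 s f.
(* [H] is nonincreasing: its derivative is [ea s * (dE s - c E s + eps g s) <= 0]. *)
pose H s := ea s * E s + eps * P s.
have ea_cont : continuous ea.
  move=> s; apply: differentiable_continuous; apply/derivable1_diffP.
  exact: (@ex_derive _ _ _ _ _ _ _ (is_derive_expR_affine c t s)).
have f_cont : {within `[0, t], continuous f}.
  by move=> s; exact: (@continuousM _ (subspace _) ea g s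
    (@continuous_subspaceT _ _ _ ea ea_cont s) (g_cont s)).
have f_int : lebesgue_measure.-integrable `[0, t] (EFin \o f).
  by apply: continuous_compact_integrable => //; exact: segment_compact.
have P_cont : {within `[0, t], continuous P}.
  exact: parameterized_integral_continuous (ltW t0) f_int.
have H_cont : {within `[0, t], continuous H}.
  move=> s; apply: (@continuousD _ _ (subspace _) (fun r => ea r * E r) (fun r => eps * P r)).
    exact: (@continuousM _ (subspace _) ea E s
      (@continuous_subspaceT _ _ _ ea ea_cont s) (E_cont s)).
  exact: (@continuousM _ (subspace _) (cst eps) P s (@cst_continuous _ _ eps s) (P_cont s)).
have H_der s : 0 < s < t -> is_derive s 1 H (ea s * (dE s - c * E s + eps * g s)).
  case/andP=> s0 st.
  have [P_derivable P'] : derivable P s 1 /\ derive1 P s = f s.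
    apply: (continuous_FTC1_closed st f_int s0).
    by have [+ _ _] := (continuous_within_itvP f t0).1 f_cont; apply; rewrite in_itv /= s0.
  have := is_deriveD (is_deriveM (is_derive_expR_affine c t s) (E_der s (andb_true_intro (conj s0 st))))
    (is_deriveZ eps (derivableP P_derivable)).
  by move/is_derive_eq; apply; rewrite -derive1E P' /GRing.scale /= /f /ea; ring.
have : H t <= H 0.
  apply: (ler0_derive1_le_cc _ _ H_cont); rewrite ?in_itv /= ?lexx ?ltW //.
  - by move=> s; rewrite in_itv /= => hs; exact: (@ex_derive _ _ _ _ _ _ _ (H_der s hs)).
  - move=> s; rewrite in_itv /= => hs; have H'_s := H_der s hs.
    rewrite derive1E derive_val.
    rewrite mulr_ge0_le0 ?expR_ge0 //; have := dE_le s hs; lra.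
rewrite /H /P /ea /f subrr mulr0 expR0 mul1r subr0.
by rewrite /parameterized_integral set_itv1 Rintegral_set1 mulr0 addr0.
Qed.

End ExpWeightedEnergy.

Section GridCurves.
Variable R : realType.
Variables (N M : nat) (dx dy : R) (px : 'I_N -> R) (py : 'I_M -> R)
          (Qx : 'M[R]_N) (Qy : 'M[R]_M).

Local Notation ip := (ipP dx dy px py).

Definition entrywise_cvg (F : set_system R) (A : R -> 'M[R]_(N, M)) (A0 : 'M[R]_(N, M)) :=
  forall i j, (fun s => A s i j) @ F --> A0 i j.

Section Limits.
Variables (F : set_system R) (FF : Filter F).

Lemma cvg_ipP A B A0 B0 : entrywise_cvg F A A0 -> entrywise_cvg F B B0 ->
  (fun s => ip (A s) (B s)) @ F --> ip A0 B0.
Proof.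
move=> cA cB; apply: cvg_big => // [|i _]; first exact: add_continuous.
apply: cvg_big => // [|j _]; first exact: add_continuous.
by apply: cvgM; [apply: cvgMl_tmp | ].
Qed.

Lemma entrywise_cvg_ddx A A0 : entrywise_cvg F A A0 ->
  entrywise_cvg F (fun s => ddx dx px Qx (A s)) (ddx dx px Qx A0).
Proof.
move=> cA i j; rewrite mxE (_ : (fun s => _) = fun s => \sum_k Dx dx px Qx i k * A s k j).
  by apply: cvg_big => // [|k _]; [exact: add_continuous | apply: cvgMl_tmp].
by apply/funext => s; rewrite mxE.
Qed.

Lemma entrywise_cvg_ddy A A0 : entrywise_cvg F A A0 ->
  entrywise_cvg F (fun s => ddy dy py Qy (A s)) (ddy dy py Qy A0).
Proof.
move=> cA i j; rewrite mxE (_ : (fun s => _) = fun s => \sum_k A s i k * (Dy dy py Qy)^T k j).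
  by apply: cvg_big => // [|k _]; [exact: add_continuous | apply: cvgMr_tmp].
by apply/funext => s; rewrite mxE.
Qed.

Lemma entrywise_cvg_curl A B A0 B0 : entrywise_cvg F A A0 -> entrywise_cvg F B B0 ->
  entrywise_cvg F (fun s => curl dx dy px py Qx Qy (A s) (B s)) (curl dx dy px py Qx Qy A0 B0).
Proof.
move=> cA cB i j.
have -> : curl dx dy px py Qx Qy A0 B0 i j = ddx dx px Qx B0 i j - ddy dy py Qy A0 i j.
  by rewrite !mxE.
rewrite (_ : (fun s => _) = fun s => ddx dx px Qx (B s) i j - ddy dy py Qy (A s) i j).
  by apply: cvgB; [exact: entrywise_cvg_ddx | exact: entrywise_cvg_ddy].
by apply/funext => s; rewrite !mxE.
Qed.

End Limits.

Lemma is_derive_ipP_sqr (A : R -> 'M[R]_(N, M)) (dA : 'M[R]_(N, M)) (x : R) :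
  (forall i j, is_derive x 1 (fun s => A s i j) (dA i j)) ->
  is_derive x 1 (fun s => ip (A s) (A s)) (2 * ip (A x) dA).
Proof.
move=> dAij; rewrite /ipP mulr_sumr -fct_sumE; apply: is_derive_sum => i.
rewrite mulr_sumr -fct_sumE; apply: is_derive_sum => j.
rewrite (_ : (fun s => _) =
    (dx * px i * (dy * py j)) \*: ((fun s => A s i j) * (fun s => A s i j))).
  have := is_deriveZ (dx * px i * (dy * py j)) (is_deriveM (dAij i j) (dAij i j)).
  by move/is_derive_eq; apply; rewrite /GRing.scale /=; ring.
by apply/funext => s; rewrite /GRing.scale /= -mulrA.
Qed.

Section Solution.
Variables V1 V2 : R -> 'M[R]_(N, M).
Hypotheses (V1_cvg0 : entrywise_cvg 0^'+ V1 (V1 0)) (V2_cvg0 : entrywise_cvg 0^'+ V2 (V2 0)).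
Hypothesis V_derivable : forall t, 0 < t -> forall i j,
  derivable (fun s => V1 s i j) t 1 /\ derivable (fun s => V2 s i j) t 1.

Lemma solution_continuous (t : R) : 0 < t ->
  entrywise_cvg (nbhs t) V1 (V1 t) /\ entrywise_cvg (nbhs t) V2 (V2 t).
Proof.
by move=> t0; split=> i j; apply: differentiable_continuous; apply/derivable1_diffP;
  have [] := V_derivable t0 i j.
Qed.

Lemma solution_within_continuous (G : R -> R) (t : R) : 0 < t ->
  (forall (F : set_system R) {FF : Filter F} s,
     entrywise_cvg F V1 (V1 s) -> entrywise_cvg F V2 (V2 s) -> G @ F --> G s) ->
  {within `[0, t], continuous G}.
Proof.
move=> t0 cvgG; apply/continuous_within_itvP => //; split.
- move=> s; rewrite in_itv /= => /andP[s0 _].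
  by have [c1 c2] := solution_continuous s0; exact: cvgG c1 c2.
- exact: cvgG.
- have [c1 c2] := solution_continuous t0.
  by apply: cvgG => i j; apply: cvg_at_left_filter; [exact: c1 | exact: c2].
Qed.

Lemma is_derive_normP2 (t : R) : 0 < t ->
  is_derive t 1 (fun s => normP2 dx dy px py (V1 s) (V2 s))
    (2 * ip (V1 t) (dt V1 t) + 2 * ip (V2 t) (dt V2 t)).
Proof.
move=> t0; have dV i j := V_derivable t0 i j.
apply: is_deriveD; apply: is_derive_ipP_sqr => i j; rewrite mxE derive1E;
  apply: derivableP; by case: (dV i j).
Qed.

End Solution.
End GridCurves.

Theorem theorem3p5 (R : realType) :
  exists F : R -> R -> R -> R,
  forall (eps : R) (u1 u2 : R -> R -> R)
         (N M : nat) (dx dy : R) (px : 'I_N -> R) (py : 'I_M -> R)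
         (Qx : 'M[R]_N) (Qy : 'M[R]_M) (C0 : R)
         (sL sR sD sU : 'I_N -> 'I_M -> R)
         (Lu Ld : R) (V1 V2 : R -> 'M[R]_(N, M)),
  0 < eps ->
  smooth2 u1 -> smooth2 u2 ->
  0 < dx -> 0 < dy ->
  (N.-1)%:R * dx = 1 -> (M.-1)%:R * dy = 1 ->
  SBP px Qx -> SBP py Qy ->
  commutator_bound dx px Qx C0 -> commutator_bound dy py Qy C0 ->
  (* penalty conditions *)
  (forall (i : 'I_N) (j : 'I_M), (i : nat) = N.-1 ->
      sR i j <= Num.min (u1 1 (j%:R * dy)) 0 / 2) ->
  (forall (i : 'I_N) (j : 'I_M), (i : nat) = 0%N ->
      sL i j <= - (Num.max (u1 0 (j%:R * dy)) 0 / 2)) ->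
  (forall (i : 'I_N) (j : 'I_M), (j : nat) = M.-1 ->
      sU i j <= Num.min (u2 (i%:R * dx) 1) 0 / 2) ->
  (forall (i : 'I_N) (j : 'I_M), (j : nat) = 0%N ->
      sD i j <= - (Num.max (u2 (i%:R * dx) 0) 0 / 2)) ->
  (* Lu bounds the derivatives of u1, u2 on [0,1]^2 *)
  (forall x y, 0 <= x <= 1 -> 0 <= y <= 1 ->
     [/\ `|pdx u1 x y| <= Lu, `|pdy u1 x y| <= Lu,
         `|pdx u2 x y| <= Lu & `|pdy u2 x y| <= Lu]) ->
  (* Ld bounds the discrete derivatives of u1, u2 (the entries of C) *)
  (forall (i : 'I_N) (j : 'I_M),
     [/\ `|ddx dx px Qx (restr dx dy u1) i j| <= Ld,
         `|ddy dy py Qy (restr dx dy u1) i j| <= Ld,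
         `|ddx dx px Qx (restr dx dy u2) i j| <= Ld &
         `|ddy dy py Qy (restr dx dy u2) i j| <= Ld]) ->
  (* V is a solution: continuous from the right at 0, differentiable for t > 0 *)
  (forall i j, (fun s => V1 s i j) @ 0^'+ --> V1 0 i j) ->
  (forall i j, (fun s => V2 s i j) @ 0^'+ --> V2 0 i j) ->
  (forall t, 0 < t -> forall i j,
     derivable (fun s => V1 s i j) t 1 /\ derivable (fun s => V2 s i j) t 1) ->
  (forall t, 0 < t ->
     let U1 := restr dx dy u1 in
     let U2 := restr dx dy u2 in
     let dxx := ddx dx px Qx in
     let dyy := ddy dy py Qy in
     let W1 := V1 t in
     let W2 := V2 t in
     let cu := curl dx dy px py Qx Qy W1 W2 in
     (* C V *)
     let CV1 := - had (dyy U2) W1 + had (dyy U1) W2 in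
     let CV2 := had (dxx U2) W1 - had (dxx U1) W2 in
     let B := Bop dx dy px py sL sR sD sU in
     dt V1 t + had U1 (dxx W1) + had U2 (dyy W1) - CV1
       + eps *: curl2_1 dx dy px py Qx Qy W1 W2
     = B W1 + eps *: (calU (invPy dy py cu) - calD (invPy dy py cu)) /\
     dt V2 t + had U1 (dxx W2) + had U2 (dyy W2) - CV2
       + eps *: curl2_2 dx dy px py Qx Qy W1 W2
     = B W2 - eps *: (calR (invPx dx px cu) - calL (invPx dx px cu))) ->
  let c := F C0 Lu Ld in
  forall t, 0 <= t ->
    normP2 dx dy px py (V1 t) (V2 t)
    + eps * (\int[lebesgue_measure]_(s in `[0, t]%classic)
               (expR (c * (t - s)) *
                ipP dx dy px py (curl dx dy px py Qx Qy (V1 s) (V2 s))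
                                (curl dx dy px py Qx Qy (V1 s) (V2 s))))
    <= expR (c * t) * normP2 dx dy px py (V1 0) (V2 0).
Proof.
exists (fun C0 Lu Ld => 2 * C0 * Lu + 4 * Ld).
move=> eps u1 u2 N M dx dy px py Qx Qy C0 sL sR sD sU Lu Ld V1 V2 eps0 u1_smooth u2_smooth
  dx0 dy0 hN hM sbpx sbpy cbx cby hR hL hU hD hLu hLd V1_cvg0 V2_cvg0 V_der V_eq c t.
rewrite le_eqVlt => /predU1P [<-|t0].
  by rewrite set_itv1 Rintegral_set1 mulr0 addr0 mulr0 expR0 mul1r.
pose E s := normP2 dx dy px py (V1 s) (V2 s).
pose cu s := curl dx dy px py Qx Qy (V1 s) (V2 s).
pose g s := ipP dx dy px py (cu s) (cu s).
pose dE s := 2 * ipP dx dy px py (V1 s) (dt V1 s) + 2 * ipP dx dy px py (V2 s) (dt V2 s).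
apply: (exp_weighted_energy_le (E := E) (g := g) (dE := dE) t0)
  => [||s /andP[s0 _]|s /andP[s0 _]].
- apply: (solution_within_continuous V1_cvg0 V2_cvg0 V_der (G := E) t0) => F FF s c1 c2.
  by apply: cvgD; apply: cvg_ipP.
- apply: (solution_within_continuous V1_cvg0 V2_cvg0 V_der (G := g) t0) => F FF s c1 c2.
  by apply: cvg_ipP; apply: entrywise_cvg_curl.
- exact (is_derive_normP2 dx dy px py V_der s0).
- have [eq1 eq2] := V_eq s s0.
  move: (energy_estimate dx0 dy0 sbpx sbpy u1_smooth u2_smooth hN hM cbx cby hR hL hU hD hLu hLd
    eq1 eq2) (mulr_ge0 (ltW eps0) (ip_ge0 dx0 dy0 sbpx sbpy (cu s))).
  rewrite /dE /E /g /normP2 /c /=; lra.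
Qed.
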